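(* Let $\Delta$ be a simplicial polytopal fan in $\mathbb{R}^d$ with ray generators $\mathbf{v}_1,\ldots,\mathbf{v}_n$. The set \[ \mathcal{U}=\{U\in\mathbb{R}^{m\times d}\colon|\hat{P}^\Delta(U,\mathbf{y})|=1\text{ for all }\mathbf{y}\in\mathbb{R}^m\}\subseteq\mathbb{R}^{m\times d} \] is semi-algebraic.
   Context: A set is semi-algebraic if it is a finite Boolean combination of sets of the form $\{\mathbf{x}\colon f_i(\mathbf{x})\ge0,\ i=1,\ldots,k\}$ with polynomials $f_i$. A fan is simplicial if every cone is generated by linearly independent vectors; polytopal if it is the normal fan of a polytope. $h_P(\mathbf{u})=\max_{\mathbf{x}\in P}\langle\mathbf{x},\mathbf{u}\rangle$. The deformation cone $\mathcal{P}(\Delta)$ is the set of polytopes whose normal fan is coarsened by $\Delta$, identified via support vectors $\mathbf{h}=(h_P(\mathbf{v}_i))_i$ with a closed polyhedral cone in $\mathbb{R}^n$. For $U\in\mathbb{R}^{m\times d}$ with rows $\mathbf{u}^{(1)},\ldots,\mathbf{u}^{(m)}$ and $\mathbf{y}\in\mathbb{R}^m$, the least-squares estimator $\hat{P}^\Delta(U,\mathbf{y})\subseteq\mathbb{R}^n$ is the set of support vectors of polytopes $P\in\mathcal{P}(\Delta)$ minimizing $\frac1m\sum_i(h_P(\mathbf{u}^{(i)})-y^{(i)})^2$. *)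

From HB Require Import structures.
From mathcomp Require Import all_boot all_order all_algebra.
From mathcomp Require Import reals.
From mathcomp Require mpoly.
From Stdlib Require List.
Set Implicit Arguments. Unset Strict Implicit. Unset Printing Implicit Defensive.
Import Order.TTheory GRing.Theory Num.Theory.
Local Open Scope ring_scope.

Section Defs.
Variable R : realType.

Definition dotv (d : nat) (x u : 'rV[R]_d) : R := \sum_(j < d) x 0 j * u 0 j.

Definition cone_of (d n : nat) (V : 'I_n -> 'rV[R]_d) (S : {set 'I_n})
  : 'rV[R]_d -> Prop :=
  fun u => exists lam : 'I_n -> R,
    (forall i, 0 <= lam i) /\ (forall i, i \notin S -> lam i = 0) /\
    u = \sum_(i < n) lam i *: V i.

Definition lin_indep (d n : nat) (V : 'I_n -> 'rV[R]_d) (S : {set 'I_n}) : Prop :=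
  forall lam : 'I_n -> R, (forall i, i \notin S -> lam i = 0) ->
    \sum_(i < n) lam i *: V i = 0 -> forall i, lam i = 0.

(* A polytope is represented as the convex hull of a nonempty finite list X *)
Definition conv (d : nat) (X : seq 'rV[R]_d) : 'rV[R]_d -> Prop :=
  fun x => exists lam : 'I_(size X) -> R,
    (forall i, 0 <= lam i) /\ \sum_i lam i = 1 /\
    x = \sum_(i < size X) lam i *: X`_i.

(* support function h_P(u) = max_{x in P} <x,u>, for P = conv X, X nonempty
   (the max of a linear form over conv X is attained on X) *)
Definition hsupp (d : nat) (X : seq 'rV[R]_d) (u : 'rV[R]_d) : R :=
  \big[Num.max/dotv (head 0 X) u]_(x <- X) dotv x u.

(* normal cone of the face F = argmax_P <., w> :
   N_F = { u | F is contained in argmax_P <., u> } *)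
Definition ncone (d : nat) (X : seq 'rV[R]_d) (w : 'rV[R]_d) : 'rV[R]_d -> Prop :=
  fun u => forall x, conv X x -> dotv x w = hsupp X w -> dotv x u = hsupp X u.

Definition simplicial_fan (d n : nat) (V : 'I_n -> 'rV[R]_d)
  (Delta : {set {set 'I_n}}) : Prop :=
  (set0 \in Delta) /\
  (forall S T : {set 'I_n}, S \in Delta -> T \subset S -> T \in Delta) /\
  (forall S T : {set 'I_n}, S \in Delta -> T \in Delta -> forall u,
      (cone_of V S u /\ cone_of V T u) <-> cone_of V (S :&: T) u) /\
  (forall S, S \in Delta -> lin_indep V S) /\
  (forall i, [set i] \in Delta).

Definition is_normal_fan_of (d n : nat) (V : 'I_n -> 'rV[R]_d)
  (Delta : {set {set 'I_n}}) (X : seq 'rV[R]_d) : Prop :=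
  (forall S, S \in Delta -> exists w, forall u, cone_of V S u <-> ncone X w u) /\
  (forall w, exists2 S, S \in Delta & forall u, cone_of V S u <-> ncone X w u).

Definition polytopal (d n : nat) (V : 'I_n -> 'rV[R]_d)
  (Delta : {set {set 'I_n}}) : Prop :=
  exists X : seq 'rV[R]_d, X != [::] /\ is_normal_fan_of V Delta X.

Definition coarsened_by (d n : nat) (V : 'I_n -> 'rV[R]_d)
  (Delta : {set {set 'I_n}}) (X : seq 'rV[R]_d) : Prop :=
  forall S, S \in Delta -> exists w, forall u, cone_of V S u -> ncone X w u.

Definition in_defcone (d n : nat) (V : 'I_n -> 'rV[R]_d)
  (Delta : {set {set 'I_n}}) (X : seq 'rV[R]_d) : Prop :=
  X != [::] /\ coarsened_by V Delta X.

Definition suppvec (d n : nat) (V : 'I_n -> 'rV[R]_d) (X : seq 'rV[R]_d)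
  : 'rV[R]_n := \row_i hsupp X (V i).

Definition lsq_loss (m d : nat) (U : 'M[R]_(m, d)) (y : 'rV[R]_m)
  (X : seq 'rV[R]_d) : R :=
  m%:R^-1 * \sum_(i < m) (hsupp X (row i U) - y 0 i) ^+ 2.

Definition lse (m d n : nat) (V : 'I_n -> 'rV[R]_d)
  (Delta : {set {set 'I_n}}) (U : 'M[R]_(m, d)) (y : 'rV[R]_m)
  : 'rV[R]_n -> Prop :=
  fun h => exists X, in_defcone V Delta X /\ h = suppvec V X /\
    forall X', in_defcone V Delta X' -> lsq_loss U y X <= lsq_loss U y X'.

Definition is_singleton (T : Type) (A : T -> Prop) : Prop :=
  exists a, forall b, A b <-> b = a.

Inductive sa_formula (N : nat) : Type :=
| SABasic of seq (mpoly.mpoly N R)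
| SANot of sa_formula N
| SAAnd of sa_formula N & sa_formula N
| SAOr of sa_formula N & sa_formula N.

Fixpoint sa_holds (N : nat) (f : sa_formula N) (x : 'I_N -> R) : Prop :=
  match f with
  | SABasic ps => forall p, List.In p ps -> 0 <= mpoly.meval x p
  | SANot g => ~ sa_holds g x
  | SAAnd g h => sa_holds g x /\ sa_holds h x
  | SAOr g h => sa_holds g x \/ sa_holds h x
  end.

Definition semialgebraic (N : nat) (A : ('I_N -> R) -> Prop) : Prop :=
  exists f : sa_formula N, forall x, A x <-> sa_holds f x.

Definition semialgebraic_mx (m d : nat) (A : 'M[R]_(m, d) -> Prop) : Prop :=
  semialgebraic (fun x : 'I_(m * d) -> R => A (vec_mx (\row_k x k))).

End Defs.

(** The least-squares loss and the estimator only see polytopes through their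
    support functions.  If the fan [Delta] is complete, every polytope of the
    deformation cone has the same support function as the convex hull of
    #|Delta| of its vertices, one maximising a direction of each cone of
    [Delta].  Quantifying over polytopes can therefore be replaced by
    quantifying over #|Delta| x d matrices, which turns "the estimator is a
    singleton for every y" into a first-order formula of ordered fields in the
    entries of U.  Quantifier elimination for real closed fields
    (Tarski-Seidenberg) makes it a Boolean combination of polynomial
    inequalities. *)

From HB Require Import structures.
From mathcomp Require Import all_boot all_order all_algebra.
From mathcomp Require Import reals.
From mathcomp Require Import ordered_qelim qe_rcf.
From mathcomp Require Import mpoly.
From mathcomp Require Import zify.
From Stdlib Require Import Classical FunctionalExtensionality.
Set Implicit Arguments. Unset Strict Implicit. Unset Printing Implicit Defensive.
Import Order.TTheory GRing.Theory Num.Theory.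
Local Open Scope ring_scope.

Section FormulasToSemialgebraic.
Variables (R : realType) (N : nat).

Fixpoint mpoly_of_term (t : GRing.term R) : {mpoly R[N]} :=
  match t with
  | GRing.Var i => if insub i is Some j then 'X_j else 0
  | GRing.Const c => c%:MP
  | GRing.NatConst k => k%:R
  | GRing.Add a b => mpoly_of_term a + mpoly_of_term b
  | GRing.Opp a => - mpoly_of_term a
  | GRing.NatMul a k => mpoly_of_term a *+ k
  | GRing.Mul a b => mpoly_of_term a * mpoly_of_term b
  | GRing.Inv _ => 0
  | GRing.Exp a k => mpoly_of_term a ^+ k
  end.

Definition env_of (x : 'I_N -> R) : seq R := map x (enum 'I_N).

Lemma nth_env_of x (i : 'I_N) : nth 0 (env_of x) i = x i.
Proof.
rewrite (nth_map i) ?size_enum_ord //.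
by congr (x _); apply: val_inj; rewrite /= nth_enum_ord.
Qed.

Lemma meval_mpoly_of_term x t :
  GRing.rterm t -> meval x (mpoly_of_term t) = GRing.eval (env_of x) t.
Proof.
elim: t => //=.
- move=> i _; case: insubP => [j _ <-|]; first by rewrite mevalXU nth_env_of.
  by rewrite raddf0 -leqNgt => le; rewrite nth_default // size_map size_enum_ord.
- by move=> c _; rewrite mevalC.
- by move=> k _; rewrite mevalMn meval1.
- by move=> a IHa b IHb /andP[ra rb]; rewrite mevalD IHa // IHb.
- by move=> a IHa ra; rewrite mevalN IHa.
- by move=> a IHa k ra; rewrite mevalMn IHa.
- by move=> a IHa b IHb /andP[ra rb]; rewrite mevalM IHa // IHb.
- by move=> a IHa k ra; rewrite -(IHa ra) (rmorphXn (meval x)).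
Qed.

Definition sa_true : sa_formula R N := SABasic [::].
Definition sa_ge (p : {mpoly R[N]}) : sa_formula R N := SABasic [:: p].

Lemma sa_holds_true x : sa_holds sa_true x.
Proof. by move=> p []. Qed.

Lemma sa_holds_ge x p : sa_holds (sa_ge p) x <-> 0 <= meval x p.
Proof. by split=> [|p_ge0 q [<-|[]]]; first by apply; left. Qed.

Fixpoint sa_of_qf (f : ord.formula R) : sa_formula R N :=
  let sa_le a b := sa_ge (mpoly_of_term b - mpoly_of_term a) in
  match f with
  | ord.Bool true => sa_true
  | ord.Bool false => SANot sa_true
  | ord.Equal a b => SAAnd (sa_le a b) (sa_le b a)
  | ord.Lt a b => SANot (sa_le b a)
  | ord.Le a b => sa_le a b
  | ord.And g h => SAAnd (sa_of_qf g) (sa_of_qf h)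
  | ord.Or g h => SAOr (sa_of_qf g) (sa_of_qf h)
  | ord.Implies g h => SAOr (SANot (sa_of_qf g)) (sa_of_qf h)
  | ord.Not g => SANot (sa_of_qf g)
  | ord.Unit _ | ord.Exists _ _ | ord.Forall _ _ => sa_true
  end.

(* Keeps [simpl] from unfolding atomic formulas into list membership. *)
Local Opaque sa_ge sa_true.

Lemma sa_holds_le x a b : GRing.rterm a -> GRing.rterm b ->
  sa_holds (sa_ge (mpoly_of_term b - mpoly_of_term a)) x <->
  GRing.eval (env_of x) a <= GRing.eval (env_of x) b.
Proof. by move=> ra rb; rewrite sa_holds_ge mevalB !meval_mpoly_of_term // subr_ge0. Qed.

Lemma sa_holds_sa_of_qf x f : ord.qf_form f -> ord.rformula f ->
  sa_holds (sa_of_qf f) x <-> ord.holds (env_of x) f.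
Proof.
elim: f => /=.
- by case=> _ _; split=> //; [move=> _; apply: sa_holds_true | move/(_ (sa_holds_true x))].
- move=> a b _ /andP[ra rb].
  rewrite !sa_holds_le //.
  by split=> [[? ?]|->]; [apply/le_anti/andP | split].
- move=> a b _ /andP[ra rb]; rewrite sa_holds_le // ltNge.
  by split=> /negP.
- by move=> a b _ /andP[ra rb]; apply: sa_holds_le.
- by [].
- move=> g IHg h IHh /andP[qg qh] /andP[rg rh].
  by rewrite -(IHg qg rg) -(IHh qh rh).
- move=> g IHg h IHh /andP[qg qh] /andP[rg rh].
  by rewrite -(IHg qg rg) -(IHh qh rh).
- move=> g IHg h IHh /andP[qg qh] /andP[rg rh].
  rewrite -(IHg qg rg) -(IHh qh rh).
  by split=> [[]|] //; case: (classic (sa_holds (sa_of_qf g) x)); auto.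
- by move=> g IHg qg rg; rewrite -(IHg qg rg).
- by [].
- by [].
Qed.

Lemma semialgebraic_holds (f : ord.formula R) :
  semialgebraic (fun x : 'I_N -> R => ord.holds (env_of x) f).
Proof.
have := ord.quantifier_elim_wf (@wf_QE_wproj R) (ord.to_rform_rformula f).
set q := ord.quantifier_elim _ _ => /andP[qf_q rf_q].
exists (sa_of_qf q) => x; rewrite sa_holds_sa_of_qf //.
by split=> [/rcf_satP/(ord.qf_evalP _ qf_q) | /(ord.qf_evalP _ qf_q)/rcf_satP].
Qed.
End FormulasToSemialgebraic.

Section FirstOrderDefinability.
Variable R : realType.
Local Notation env := (nat -> R).

Definition env_nth (e : seq R) : env := nth 0 e.

Definition definable (P : env -> Prop) :=
  exists f : ord.formula R, forall e, P (env_nth e) <-> ord.holds e f.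

Definition polynomial_fun (F : env -> R) :=
  exists t : GRing.term R, forall e, F (env_nth e) = GRing.eval e t.

Lemma definable_ext P Q : definable P -> (forall g, P g <-> Q g) -> definable Q.
Proof. by case=> f Pf PQ; exists f => e; rewrite -PQ. Qed.

Lemma polynomial_fun_ext F G :
  polynomial_fun F -> (forall g, F g = G g) -> polynomial_fun G.
Proof. by case=> t Ft FG; exists t => e; rewrite -FG. Qed.

Lemma polynomial_fun_var i : polynomial_fun (fun g => g i).
Proof. by exists (@GRing.Var R i). Qed.

Lemma polynomial_fun_const c : polynomial_fun (fun _ => c).
Proof. by exists (@GRing.Const R c). Qed.

Lemma polynomial_funD F G :
  polynomial_fun F -> polynomial_fun G -> polynomial_fun (fun g => F g + G g).
Proof. by case=> t Ft [u Gu]; exists (GRing.Add t u) => e /=; rewrite Ft Gu. Qed.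

Lemma polynomial_funN F : polynomial_fun F -> polynomial_fun (fun g => - F g).
Proof. by case=> t Ft; exists (GRing.Opp t) => e /=; rewrite Ft. Qed.

Lemma polynomial_funM F G :
  polynomial_fun F -> polynomial_fun G -> polynomial_fun (fun g => F g * G g).
Proof. by case=> t Ft [u Gu]; exists (GRing.Mul t u) => e /=; rewrite Ft Gu. Qed.

Lemma polynomial_funX F k : polynomial_fun F -> polynomial_fun (fun g => F g ^+ k).
Proof. by case=> t Ft; exists (GRing.Exp t k) => e /=; rewrite Ft. Qed.

Lemma polynomial_fun_sum (I : Type) (s : seq I) (F : I -> env -> R) :
  (forall i, polynomial_fun (F i)) -> polynomial_fun (fun g => \sum_(i <- s) F i g).
Proof.
move=> polyF; elim: s => [|i s IHs].
  by apply: polynomial_fun_ext (polynomial_fun_const 0) _ => g; rewrite big_nil.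
by apply: polynomial_fun_ext (polynomial_funD (polyF i) IHs) _ => g; rewrite big_cons.
Qed.

Lemma definable_le F G :
  polynomial_fun F -> polynomial_fun G -> definable (fun g => F g <= G g).
Proof. by case=> t Ft [u Gu]; exists (ord.Le t u) => e /=; rewrite Ft Gu. Qed.

Lemma definable_eq F G :
  polynomial_fun F -> polynomial_fun G -> definable (fun g => F g = G g).
Proof. by case=> t Ft [u Gu]; exists (ord.Equal t u) => e /=; rewrite Ft Gu. Qed.

Lemma definable_bool (b : bool) : definable (fun _ => b).
Proof. by exists (ord.Bool b). Qed.

Lemma definable_and P Q : definable P -> definable Q -> definable (fun g => P g /\ Q g).
Proof. by case=> f Pf [h Qh]; exists (ord.And f h) => e /=; rewrite Pf Qh. Qed.

Lemma definable_or P Q : definable P -> definable Q -> definable (fun g => P g \/ Q g).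
Proof. by case=> f Pf [h Qh]; exists (ord.Or f h) => e /=; rewrite Pf Qh. Qed.

Lemma definable_imp P Q : definable P -> definable Q -> definable (fun g => P g -> Q g).
Proof. by case=> f Pf [h Qh]; exists (ord.Implies f h) => e /=; rewrite Pf Qh. Qed.

Lemma definable_not P : definable P -> definable (fun g => ~ P g).
Proof. by case=> f Pf; exists (ord.Not f) => e /=; rewrite Pf. Qed.

Lemma definable_exists_fin (T : finType) (P : T -> env -> Prop) :
  (forall t, definable (P t)) -> definable (fun g => exists t, P t g).
Proof.
move=> defP; suff: definable (fun g => exists2 t, t \in enum T & P t g).
  by move/definable_ext; apply=> g; split=> [[t _]|[t]]; exists t; rewrite ?mem_enum.
elim: (enum T) => [|t s IHs].
  by apply: definable_ext (definable_bool false) _ => g; split=> // -[].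
apply: definable_ext (definable_or (defP t) IHs) _ => g; split.
  by case=> [Pt|[u us Pu]]; [exists t; rewrite ?mem_head | exists u; rewrite ?inE ?us ?orbT].
by case=> u; rewrite inE => /orP[/eqP-> Pt|us Pu]; [left|right; exists u].
Qed.

Lemma definable_forall_fin (T : finType) (P : T -> env -> Prop) :
  (forall t, definable (P t)) -> definable (fun g => forall t, P t g).
Proof.
move=> defP; have := definable_not (definable_exists_fin (fun t => definable_not (defP t))).
move/definable_ext; apply=> g; split=> [notex t | all [t]]; last exact.
by apply: NNPP => Pt; apply: notex; exists t.
Qed.

Lemma definable_iff P Q : definable P -> definable Q -> definable (fun g => P g <-> Q g).
Proof.
move=> defP defQ.
have := definable_and (definable_imp defP defQ) (definable_imp defQ defP).
by move/definable_ext; apply=> g; split=> -[].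
Qed.

Definition env_set (g : env) i x : env := fun j => if j == i then x else g j.

Lemma env_nth_set_nth e i x : env_nth (set_nth 0 e i x) = env_set (env_nth e) i x.
Proof. by apply: functional_extensionality => j; rewrite /env_nth nth_set_nth. Qed.

Lemma definable_exists_var i P :
  definable P -> definable (fun g => exists x, P (env_set g i x)).
Proof.
case=> f Pf; exists (ord.Exists i f) => e /=.
by split=> -[x Px]; exists x; move: Px; rewrite -Pf env_nth_set_nth.
Qed.

Definition env_splice (g : env) f k (v : env) : env :=
  fun j => if (f <= j < f + k)%N then v (j - f)%N else g j.

Lemma env_splice0 g f v : env_splice g f 0 v = g.
Proof.
apply: functional_extensionality => j; rewrite /env_splice addn0.
by case: leqP => //= /leq_trans/(_ (leqnn _)) ->.
Qed.

Lemma env_spliceS g f k v :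
  env_splice g f k.+1 v = env_set (env_splice g f k v) (f + k) (v k).
Proof.
apply: functional_extensionality => j; rewrite /env_splice /env_set.
case: eqP => [->|ne]; first by rewrite leq_addr addnS ltnSn addKn.
by rewrite addnS ltnS (leq_eqVlt j) (introF eqP ne).
Qed.

Lemma definable_exists_block f k P :
  definable P -> definable (fun g => exists v, P (env_splice g f k v)).
Proof.
elim: k P => [|k IHk] P defP.
  by apply: definable_ext defP _ => g; split=> [|[v]]; [exists g | ]; rewrite env_splice0.
apply: definable_ext (IHk _ (definable_exists_var (f + k) defP)) _ => g; split.
  case=> v [x Px]; exists (fun j => if j == k then x else v j).
  rewrite env_spliceS eqxx; congr (P (env_set _ _ _)): Px.
  apply: functional_extensionality => j; rewrite /env_splice.
  by case: ifP => // /andP[le lt]; case: eqP => // jk; lia.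
by case=> v; rewrite env_spliceS => Pv; exists v, (v k).
Qed.

Definition eq_prefix f (g g' : env) := forall i, (i < f)%N -> g i = g' i.

Definition env_row (g : env) b k : 'rV[R]_k := \row_(i < k) g (b + i)%N.

Lemma eq_prefix_splice f k g v : eq_prefix f (env_splice g f k v) g.
Proof. by move=> i lt_if; rewrite /env_splice leqNgt lt_if. Qed.

Lemma env_row_splice f k g v : env_row (env_splice g f k v) f k = \row_(i < k) v i.
Proof. by apply/rowP => i; rewrite !mxE /env_splice leq_addr ltn_add2l ltn_ord addKn. Qed.

(* A quantified block of k variables is stored in the variables f, ..., f+k-1,
   where f bounds the variables the surrounding terms depend on. *)
Definition poly_mx f a b (F : env -> 'M[R]_(a, b)) :=
  (forall g g', eq_prefix f g g' -> F g = F g') /\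
  (forall i j, polynomial_fun (fun g => F g i j)).

Lemma poly_mx_prefix f a b (F : env -> 'M[R]_(a, b)) g g' :
  poly_mx f F -> eq_prefix f g g' -> F g = F g'.
Proof. by case=> + _; apply. Qed.

Lemma poly_mx_entry f a b (F : env -> 'M[R]_(a, b)) i j :
  poly_mx f F -> polynomial_fun (fun g => F g i j).
Proof. by case=> _; apply. Qed.

Lemma poly_mx_fresh_row f k : poly_mx (f + k) (fun g => env_row g f k).
Proof.
split=> [g g' eq_gg' | i j].
  by apply/rowP => i; rewrite !mxE; apply: eq_gg'; rewrite ltn_add2l.
by apply: polynomial_fun_ext (polynomial_fun_var (f + j)) _ => g; rewrite mxE.
Qed.

Lemma poly_mx_widen f k a b (F : env -> 'M[R]_(a, b)) :
  poly_mx f F -> poly_mx (f + k) F.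
Proof.
case=> prefixF polyF; split=> // g g' eq_gg'; apply: prefixF => i lt_if.
by apply: eq_gg'; rewrite ltn_addr.
Qed.

Lemma poly_mx_const f a b (A : 'M[R]_(a, b)) : poly_mx f (fun _ => A).
Proof. by split=> // i j; apply: polynomial_fun_const. Qed.

Lemma poly_mx_row f a b (F : env -> 'M[R]_(a, b)) i :
  poly_mx f F -> poly_mx f (fun g => row i (F g)).
Proof.
move=> polyF; split=> [g g' /(poly_mx_prefix polyF) -> // | i' j].
by apply: polynomial_fun_ext (poly_mx_entry i j polyF) _ => g; rewrite mxE.
Qed.

Lemma poly_mx_vec_mx f a b (F : env -> 'rV[R]_(a * b)) :
  poly_mx f F -> poly_mx f (fun g => vec_mx (F g)).
Proof.
move=> polyF; split=> [g g' /(poly_mx_prefix polyF) -> // | i j].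
by apply: polynomial_fun_ext (poly_mx_entry 0 (mxvec_index i j) polyF) _ => g; rewrite mxE.
Qed.

Lemma poly_mx_mul f a b c (F : env -> 'M[R]_(a, b)) (G : env -> 'M[R]_(b, c)) :
  poly_mx f F -> poly_mx f G -> poly_mx f (fun g => F g *m G g).
Proof.
move=> polyF polyG; split=> [g g' eq_gg' | i j].
  by rewrite (poly_mx_prefix polyF eq_gg') (poly_mx_prefix polyG eq_gg').
have polyFG k : polynomial_fun (fun g => F g i k * G g k j).
  exact: polynomial_funM (poly_mx_entry i k polyF) (poly_mx_entry k j polyG).
have := polynomial_fun_sum (index_enum 'I_b) polyFG.
by move/polynomial_fun_ext; apply=> g; rewrite mxE.
Qed.

Lemma definable_eq_mx f a b (F G : env -> 'M[R]_(a, b)) :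
  poly_mx f F -> poly_mx f G -> definable (fun g => F g = G g).
Proof.
move=> polyF polyG.
have := definable_forall_fin (fun i => definable_forall_fin (fun j =>
  definable_eq (poly_mx_entry i j polyF) (poly_mx_entry i j polyG))).
by move/definable_ext; apply=> g; split=> [eqFG | -> //]; apply/matrixP.
Qed.

Lemma definable_exists_row f k (Q : env -> 'rV[R]_k -> Prop) :
  (forall g g' y, eq_prefix f g g' -> Q g y <-> Q g' y) ->
  definable (fun g => Q g (env_row g f k)) -> definable (fun g => exists y, Q g y).
Proof.
move=> prefixQ /(definable_exists_block f k) /definable_ext; apply=> g; split.
  case=> v; rewrite env_row_splice (prefixQ _ _ _ (@eq_prefix_splice f k g v)).
  by exists (\row_(i < k) v i).
case=> y Qy; exists (fun i => if insub i is Some j then y 0 j else 0).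
rewrite (prefixQ _ _ _ (@eq_prefix_splice f k g _)) env_row_splice.
suff -> : \row_(i < k) (if insub (val i) is Some j then y 0 j else 0) = y by [].
by apply/rowP => i; rewrite mxE valK.
Qed.

Lemma definable_forall_row f k (Q : env -> 'rV[R]_k -> Prop) :
  (forall g g' y, eq_prefix f g g' -> Q g y <-> Q g' y) ->
  definable (fun g => Q g (env_row g f k)) -> definable (fun g => forall y, Q g y).
Proof.
move=> prefixQ defQ.
have := definable_not (@definable_exists_row f k (fun g y => ~ Q g y)
  (fun g g' y eq_gg' => not_iff_compat (prefixQ g g' y eq_gg')) (definable_not defQ)).
move/definable_ext; apply=> g; split=> [notex y | all [y]]; last exact.
by apply: NNPP => Qy; apply: notex; exists y.
Qed.

Lemma definable_exists_mx f a b (Q : env -> 'M[R]_(a, b) -> Prop) :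
  (forall g g' M, eq_prefix f g g' -> Q g M <-> Q g' M) ->
  definable (fun g => Q g (vec_mx (env_row g f (a * b)))) ->
  definable (fun g => exists M, Q g M).
Proof.
move=> prefixQ /(@definable_exists_row f _ (fun g r => Q g (vec_mx r))).
move=> /(_ (fun g g' r => prefixQ g g' _)) /definable_ext; apply=> g.
by split=> -[M QM]; [exists (vec_mx M) | exists (mxvec M); rewrite mxvecK].
Qed.

Lemma definable_forall_mx f a b (Q : env -> 'M[R]_(a, b) -> Prop) :
  (forall g g' M, eq_prefix f g g' -> Q g M <-> Q g' M) ->
  definable (fun g => Q g (vec_mx (env_row g f (a * b)))) ->
  definable (fun g => forall M, Q g M).
Proof.
move=> prefixQ /(@definable_forall_row f _ (fun g r => Q g (vec_mx r))).
move=> /(_ (fun g g' r => prefixQ g g' _)) /definable_ext; apply=> g.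
by split=> QM M; [rewrite -(mxvecK M) | ].
Qed.

Lemma env_row_env_of N (x : 'I_N -> R) : env_row (env_nth (env_of x)) 0 N = \row_k x k.
Proof. by apply/rowP => k; rewrite !mxE /env_nth add0n nth_env_of. Qed.

Lemma semialgebraic_definable N (P : env -> Prop) :
  definable P -> semialgebraic (fun x : 'I_N -> R => P (env_nth (env_of x))).
Proof.
case=> f Pf; have [sf sfP] := semialgebraic_holds N f.
by exists sf => x; rewrite Pf.
Qed.

End FirstOrderDefinability.

Section SupportFunctions.
Variables (R : realType) (d : nat).
Implicit Types (X Y : seq 'rV[R]_d) (u w x : 'rV[R]_d).

Lemma dotv_lincomb (I : finType) (c : I -> R) (p : I -> 'rV[R]_d) u :
  dotv (\sum_i c i *: p i) u = \sum_i c i * dotv (p i) u.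
Proof.
rewrite /dotv; under eq_bigr do rewrite summxE big_distrl /=.
rewrite exchange_big /=; apply: eq_bigr => i _; rewrite big_distrr /=.
by apply: eq_bigr => j _; rewrite mxE mulrA.
Qed.

Lemma dotv_le_hsupp X u x : x \in X -> dotv x u <= hsupp X u.
Proof.
by move=> xX; exact: (le_bigmax_seq (dotv (head 0 X) u) x predT (fun y => dotv y u) xX erefl).
Qed.

Lemma hsupp_attained X u : X != [::] -> exists2 x, x \in X & hsupp X u = dotv x u.
Proof.
case: X => // x0 X _; rewrite /hsupp big_seq.
apply: (big_ind (fun a => exists2 x, x \in x0 :: X & a = dotv x u)).
- by exists x0; rewrite ?mem_head.
- move=> _ _ [x1 x1X ->] [x2 x2X ->].
  by case: leP => _; [exists x2 | exists x1].
- by move=> x xX; exists x.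
Qed.

Lemma hsupp_eqP X u a : X != [::] ->
  a = hsupp X u <-> (forall x, x \in X -> dotv x u <= a) /\ exists2 x, x \in X & dotv x u = a.
Proof.
move=> X_neq0; split=> [-> | [le_a [x xX xa]]].
  split=> [x|]; first exact: dotv_le_hsupp.
  by have [x xX ->] := hsupp_attained u X_neq0; exists x.
apply/le_anti/andP; split; first by rewrite -xa dotv_le_hsupp.
by have [y yX ->] := hsupp_attained u X_neq0; apply: le_a.
Qed.

Lemma mem_conv X x : x \in X -> conv X x.
Proof.
move=> xX; have i0_lt : (index x X < size X)%N by rewrite index_mem.
pose i0 := Ordinal i0_lt.
exists (fun i => (i == i0)%:R); split=> [i|]; first exact: ler0n.
by split; rewrite (bigD1 i0) //= eqxx big1 ?addr0 ?scale1r ?nth_index // => i /negbTE ->;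
  rewrite ?scale0r.
Qed.

Lemma conv_lincomb X (I : finType) (p : I -> 'rV[R]_d) (c : I -> R) :
  (forall i, conv X (p i)) -> (forall i, 0 <= c i) -> \sum_i c i = 1 ->
  conv X (\sum_i c i *: p i).
Proof.
move=> convp c_ge0 c_sum1; have [mu mu_p] := fin_all_exists convp.
exists (fun j => \sum_i c i * mu i j); split.
  by move=> j; apply: sumr_ge0 => i _; apply: mulr_ge0 => //; case: (mu_p i).
split.
  rewrite exchange_big /= -c_sum1; apply: eq_bigr => i _.
  by rewrite -big_distrr /=; case: (mu_p i) => _ [-> _]; rewrite mulr1.
under [RHS]eq_bigr do rewrite scaler_suml.
rewrite exchange_big /=; apply: eq_bigr => i _.
by case: (mu_p i) => _ [_ ->]; rewrite scaler_sumr; apply: eq_bigr => j _; rewrite scalerA.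
Qed.

Lemma conv_sub X Y x : (forall y, y \in Y -> conv X y) -> conv Y x -> conv X x.
Proof.
move=> convY [lam [lam_ge0 [lam_sum1 ->]]].
by apply: conv_lincomb => // i; apply/convY/mem_nth.
Qed.

Lemma ncone_sub X Y w u : (forall y, y \in Y -> conv X y) ->
  (forall v, hsupp Y v = hsupp X v) -> ncone X w u -> ncone Y w u.
Proof. by move=> convY hYX nX x /(conv_sub convY) convx; rewrite !hYX; apply: nX. Qed.

Lemma lsq_loss_hsupp m (U : 'M[R]_(m, d)) y X Y :
  (forall v, hsupp X v = hsupp Y v) -> lsq_loss U y X = lsq_loss U y Y.
Proof. by move=> hXY; rewrite /lsq_loss; under eq_bigr do rewrite hXY. Qed.

Lemma suppvec_hsupp n (V : 'I_n -> 'rV[R]_d) X Y :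
  (forall v, hsupp X v = hsupp Y v) -> suppvec V X = suppvec V Y.
Proof. by move=> hXY; apply/rowP => i; rewrite !mxE. Qed.

Definition row_seq K (M : 'M[R]_(K, d)) : seq 'rV[R]_d := [seq row k M | k <- enum 'I_K].

Section RowSeq.
Variables (K : nat) (M : 'M[R]_(K, d)).

Lemma size_row_seq : size (row_seq M) = K.
Proof. by rewrite size_map size_enum_ord. Qed.

Lemma nth_row_seq (k : 'I_K) : (row_seq M)`_k = row k M.
Proof. by rewrite (nth_map k) ?size_enum_ord // nth_ord_enum. Qed.

Lemma mem_row_seq x : x \in row_seq M <-> exists k, x = row k M.
Proof.
split=> [/mapP[k _ ->] | [k ->]]; first by exists k.
by apply: map_f; rewrite mem_enum.
Qed.

Hypothesis K_gt0 : (0 < K)%N.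

Lemma row_seq_neq0 : row_seq M != [::].
Proof. by rewrite -size_eq0 size_row_seq -lt0n. Qed.

Lemma eq_hsupp_row_seqP u a : a = hsupp (row_seq M) u <->
  (forall k, dotv (row k M) u <= a) /\ exists k, dotv (row k M) u = a.
Proof.
rewrite (hsupp_eqP _ _ row_seq_neq0); split=> [[le_a [x /mem_row_seq[k ->] xa]] | [le_a [k ka]]].
  by split=> [k'|]; [apply: le_a; apply/mem_row_seq; exists k' | exists k].
split=> [x /mem_row_seq[k' ->] | ]; first exact: le_a.
by exists (row k M) => //; apply/mem_row_seq; exists k.
Qed.

End RowSeq.

Lemma conv_row_seqP K (M : 'M[R]_(K, d)) x : conv (row_seq M) x <->
  exists lam : 'rV[R]_K, (forall k, 0 <= lam 0 k) /\ \sum_k lam 0 k = 1 /\ x = lam *m M.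
Proof.
have conv_size K' (sizeK' : size (row_seq M) = K') : conv (row_seq M) x <->
    exists lam : 'I_K' -> R, (forall i, 0 <= lam i) /\ \sum_i lam i = 1 /\
      x = \sum_i lam i *: (row_seq M)`_i.
  by subst K'.
rewrite (conv_size K (size_row_seq M)); split.
  case=> lam [lam_ge0 [lam_sum1 ->]]; exists (\row_k lam k).
  split=> [k|]; first by rewrite mxE.
  split; first by under eq_bigr do rewrite mxE.
  by rewrite mulmx_sum_row; apply: eq_bigr => k _; rewrite mxE nth_row_seq.
case=> lam [lam_ge0 [lam_sum1 ->]]; exists (lam 0); do 2!split=> //.
by rewrite mulmx_sum_row; apply: eq_bigr => k _; rewrite nth_row_seq.
Qed.

Definition row_argmax K m (M : 'M[R]_(K, d)) (U : 'M[R]_(m, d)) (s : 'I_m -> 'I_K) :=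
  forall i, dotv (row (s i) M) (row i U) = hsupp (row_seq M) (row i U).

Lemma lsq_loss_row_argmax K m (M : 'M[R]_(K, d)) (U : 'M[R]_(m, d)) (y : 'rV[R]_m)
    (s : 'I_m -> 'I_K) :
  row_argmax M U s ->
  lsq_loss U y (row_seq M) = m%:R^-1 * \sum_i (dotv (row (s i) M) (row i U) - y 0 i) ^+ 2.
Proof. by move=> argmax_s; rewrite /lsq_loss; under eq_bigr do rewrite -argmax_s. Qed.

Lemma exists_row_argmax K m (M : 'M[R]_(K, d)) (U : 'M[R]_(m, d)) :
  (0 < K)%N -> exists s : {ffun 'I_m -> 'I_K}, row_argmax M U s.
Proof.
move=> K_gt0; have /fin_all_exists[s argmax_s] : forall i, exists k : 'I_K,
    dotv (row k M) (row i U) = hsupp (row_seq M) (row i U).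
  by move=> i; have [_ [k]] := (eq_hsupp_row_seqP M K_gt0 (row i U) _).1 erefl; exists k.
by exists [ffun i => s i] => i; rewrite ffunE.
Qed.

End SupportFunctions.

Section Fans.
Variables (R : realType) (d n : nat) (V : 'I_n -> 'rV[R]_d)
  (Delta : {set {set 'I_n}}).

Lemma cone_ofP S u : cone_of V S u <->
  exists lam : 'rV[R]_n, (forall i, 0 <= lam 0 i) /\
    (forall i, i \notin S -> lam 0 i = 0) /\ u = lam *m \matrix_i V i.
Proof.
split=> [[lam [lam_ge0 [lamS ->]]] | [lam [lam_ge0 [lamS ->]]]].
  exists (\row_i lam i); split=> [i|]; first by rewrite mxE.
  split=> [i /lamS|]; first by rewrite mxE.
  by rewrite mulmx_sum_row; apply: eq_bigr => i _; rewrite rowK mxE.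
exists (lam 0); do 2!split=> //.
by rewrite mulmx_sum_row; apply: eq_bigr => i _; rewrite rowK.
Qed.

Lemma polytopal_covers : polytopal V Delta ->
  forall w, exists2 S, S \in Delta & cone_of V S w.
Proof.
case=> X [_ [_ fanX]] w; have [S SDelta coneS] := fanX w.
by exists S => //; apply/coneS => x _ ->.
Qed.

Lemma coarsened_by_sub X Y : (forall y, y \in Y -> conv X y) ->
  (forall v, hsupp Y v = hsupp X v) -> coarsened_by V Delta X -> coarsened_by V Delta Y.
Proof.
move=> convY hYX coarseX S SDelta; have [w coneS] := coarseX S SDelta.
by exists w => u /coneS; apply: ncone_sub.
Qed.

End Fans.

Section VertexReduction.
Variables (R : realType) (d n : nat) (V : 'I_n -> 'rV[R]_d)
  (Delta : {set {set 'I_n}}).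
Hypothesis Delta_covers : forall w, exists2 S, S \in Delta & cone_of V S w.

Lemma card_fan_gt0 : (0 < #|Delta|)%N.
Proof. by have [S SDelta _] := Delta_covers 0; apply/card_gt0P; exists S. Qed.

Lemma in_defcone_row_seq_repr X : in_defcone V Delta X ->
  exists M : 'M[R]_(#|Delta|, d),
    in_defcone V Delta (row_seq M) /\ forall u, hsupp (row_seq M) u = hsupp X u.
Proof.
case=> X_neq0 coarseX.
have /fin_all_exists[p p_max] : forall k : 'I_#|Delta|, exists p : 'rV[R]_d * 'rV[R]_d,
    [/\ p.2 \in X, dotv p.2 p.1 = hsupp X p.1 &
        forall u, cone_of V (enum_val k) u -> ncone X p.1 u].
  move=> k; have [w coneS] := coarseX _ (enum_valP k).
  have [x xX xw] := hsupp_attained w X_neq0.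
  by exists (w, x); split.
pose M := \matrix_k (p k).2.
have rowM k : row k M = (p k).2 by rewrite rowK.
have convM y : y \in row_seq M -> conv X y.
  by case/mem_row_seq => k ->; rewrite rowM; apply: mem_conv; case: (p_max k).
have hsuppM u : hsupp (row_seq M) u = hsupp X u.
  apply/esym/(eq_hsupp_row_seqP _ card_fan_gt0).
  split=> [k|]; first by rewrite rowM; apply: dotv_le_hsupp; case: (p_max k).
  (* [u] lies in some cone of [Delta], whose chosen vertex maximises [u]. *)
  have [S SDelta coneS] := Delta_covers u.
  pose k := enum_rank_in SDelta S.
  have [xX xw ncone_k] := p_max k.
  exists k; rewrite rowM; apply: (ncone_k u) => //; last exact: mem_conv.
  by rewrite enum_rankK_in.
exists M; split=> //; split; first exact: row_seq_neq0 card_fan_gt0.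
exact: coarsened_by_sub convM hsuppM coarseX.
Qed.

Lemma lse_row_seqP m (U : 'M[R]_(m, d)) y h : lse V Delta U y h <->
  exists M : 'M[R]_(#|Delta|, d), in_defcone V Delta (row_seq M) /\
    h = suppvec V (row_seq M) /\
    forall M' : 'M[R]_(#|Delta|, d), in_defcone V Delta (row_seq M') ->
      lsq_loss U y (row_seq M) <= lsq_loss U y (row_seq M').
Proof.
split=> [[X [defX [-> minX]]] | [M [defM [-> minM]]]].
  have [M [defM hsuppM]] := in_defcone_row_seq_repr defX.
  exists M; rewrite (suppvec_hsupp V hsuppM) (lsq_loss_hsupp U y hsuppM).
  by split=> //; split=> // M' /minX.
exists (row_seq M); split=> //; split=> // X /in_defcone_row_seq_repr[M' [defM' hsuppM']].
by rewrite -(lsq_loss_hsupp U y hsuppM'); apply: minM.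
Qed.

End VertexReduction.

Section DefinableGeometry.
Variables (R : realType) (d n : nat) (V : 'I_n -> 'rV[R]_d)
  (Delta : {set {set 'I_n}}) (K : nat).
Hypothesis K_gt0 : (0 < K)%N.
Local Notation env := (nat -> R).
Implicit Types (M N : env -> 'M[R]_(K, d)).

Lemma polynomial_fun_dotv f (x u : env -> 'rV[R]_d) :
  poly_mx f x -> poly_mx f u -> polynomial_fun (fun g => dotv (x g) (u g)).
Proof.
move=> px pu; apply: (polynomial_fun_sum (index_enum 'I_d)) => j.
exact: polynomial_funM (poly_mx_entry 0 j px) (poly_mx_entry 0 j pu).
Qed.

Lemma definable_eq_hsupp f M (u : env -> 'rV[R]_d) (a : env -> R) :
  poly_mx f M -> poly_mx f u -> polynomial_fun a ->
  definable (fun g => a g = hsupp (row_seq (M g)) (u g)).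
Proof.
move=> pM pu pa; have dot k := polynomial_fun_dotv (poly_mx_row k pM) pu.
have := definable_and (definable_forall_fin (fun k => definable_le (dot k) pa))
  (definable_exists_fin (fun k => definable_eq (dot k) pa)).
by move/definable_ext; apply=> g; rewrite (eq_hsupp_row_seqP _ K_gt0).
Qed.

Lemma definable_conv_row_seq f M (x : env -> 'rV[R]_d) :
  poly_mx f M -> poly_mx f x -> definable (fun g => conv (row_seq (M g)) (x g)).
Proof.
move=> pM px; pose Q g (lam : 'rV[R]_K) :=
  (forall k, 0 <= lam 0 k) /\ \sum_k lam 0 k = 1 /\ x g = lam *m M g.
suff: definable (fun g => exists lam, Q g lam).
  by move/definable_ext; apply=> g; rewrite conv_row_seqP.
apply: (@definable_exists_row _ f) => [g g' lam eq_gg' | ].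
  by rewrite /Q (poly_mx_prefix pM eq_gg') (poly_mx_prefix px eq_gg').
have plam := poly_mx_fresh_row R f K.
rewrite /Q; apply: definable_and.
  apply: definable_forall_fin => k.
  by apply: definable_le; [apply: polynomial_fun_const | apply: poly_mx_entry plam].
apply: definable_and.
  apply: definable_eq; last exact: polynomial_fun_const.
  by apply: (polynomial_fun_sum (index_enum 'I_K)) => k; apply: poly_mx_entry plam.
by apply: (definable_eq_mx (poly_mx_widen K px)); apply: poly_mx_mul plam (poly_mx_widen K pM).
Qed.

Lemma definable_ncone_row_seq f M (w u : env -> 'rV[R]_d) :
  poly_mx f M -> poly_mx f w -> poly_mx f u ->
  definable (fun g => ncone (row_seq (M g)) (w g) (u g)).
Proof.
move=> pM pw pu; rewrite /ncone.
apply: (@definable_forall_row _ f d (fun g (z : 'rV[R]_d) => conv (row_seq (M g)) z ->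
    dotv z (w g) = hsupp (row_seq (M g)) (w g) ->
    dotv z (u g) = hsupp (row_seq (M g)) (u g))) => [g g' z eq_gg' | ].
  by rewrite (poly_mx_prefix pM eq_gg') (poly_mx_prefix pw eq_gg') (poly_mx_prefix pu eq_gg').
have px := poly_mx_fresh_row R f d.
have [[pM' pw'] pu'] := (poly_mx_widen d pM, poly_mx_widen d pw, poly_mx_widen d pu).
apply: definable_imp; first exact: definable_conv_row_seq pM' px.
apply: definable_imp; first exact: definable_eq_hsupp pM' pw' (polynomial_fun_dotv px pw').
exact: definable_eq_hsupp pM' pu' (polynomial_fun_dotv px pu').
Qed.

Lemma definable_cone_of f S (u : env -> 'rV[R]_d) :
  poly_mx f u -> definable (fun g => cone_of V S (u g)).
Proof.
move=> pu; pose Q g (lam : 'rV[R]_n) := (forall i, 0 <= lam 0 i) /\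
  (forall i, i \notin S -> lam 0 i = 0) /\ u g = lam *m \matrix_i V i.
suff: definable (fun g => exists lam, Q g lam).
  by move/definable_ext; apply=> g; rewrite cone_ofP.
apply: (@definable_exists_row _ f) => [g g' lam eq_gg' | ].
  by rewrite /Q (poly_mx_prefix pu eq_gg').
have plam := poly_mx_fresh_row R f n.
rewrite /Q; apply: definable_and.
  apply: definable_forall_fin => i.
  by apply: definable_le; [apply: polynomial_fun_const | apply: poly_mx_entry plam].
apply: definable_and.
  apply: definable_forall_fin => i; apply: definable_imp; first exact: definable_bool.
  by apply: definable_eq; [apply: poly_mx_entry plam | apply: polynomial_fun_const].
apply: (definable_eq_mx (poly_mx_widen n pu)).
exact: poly_mx_mul plam (poly_mx_const _ _).
Qed.

Lemma definable_in_defcone_row_seq f M :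
  poly_mx f M -> definable (fun g => in_defcone V Delta (row_seq (M g))).
Proof.
move=> pM; suff: definable (fun g => coarsened_by V Delta (row_seq (M g))).
  by move/definable_ext; apply=> g; split=> [|[] //]; split=> //; apply: row_seq_neq0.
rewrite /coarsened_by; apply: definable_forall_fin => S.
apply: definable_imp; first exact: definable_bool.
apply: (@definable_exists_row _ f d (fun g (w : 'rV[R]_d) =>
    forall u, cone_of V S u -> ncone (row_seq (M g)) w u)) => [g g' w eq_gg' | ].
  by rewrite (poly_mx_prefix pM eq_gg').
have [pw pM'] := (poly_mx_fresh_row R f d, poly_mx_widen d pM).
apply: (@definable_forall_row _ (f + d) d (fun g (u : 'rV[R]_d) =>
    cone_of V S u -> ncone (row_seq (M g)) (env_row g f d) u)) => [g g' u eq_gg' | ].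
  by rewrite (poly_mx_prefix pM' eq_gg') (poly_mx_prefix pw eq_gg').
have pu := poly_mx_fresh_row R (f + d) d.
apply: definable_imp; first exact: definable_cone_of pu.
exact: definable_ncone_row_seq (poly_mx_widen d pM') (poly_mx_widen d pw) pu.
Qed.

Lemma definable_eq_suppvec f M (h : env -> 'rV[R]_n) : poly_mx f M -> poly_mx f h ->
  definable (fun g => h g = suppvec V (row_seq (M g))).
Proof.
move=> pM ph; have := definable_forall_fin (fun j => definable_eq_hsupp
  pM (poly_mx_const f (V j)) (poly_mx_entry 0 j ph)).
move/definable_ext; apply=> g.
by split=> [eq_h | ->]; [apply/rowP => j; rewrite mxE | move=> j; rewrite mxE].
Qed.

Lemma definable_le_lsq_loss m f (U : env -> 'M[R]_(m, d)) (y : env -> 'rV[R]_m) M M' :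
  poly_mx f U -> poly_mx f y -> poly_mx f M -> poly_mx f M' ->
  definable (fun g => lsq_loss (U g) (y g) (row_seq (M g)) <=
                      lsq_loss (U g) (y g) (row_seq (M' g))).
Proof.
move=> pU py pM pM'.
pose loss (N : 'M[R]_(K, d)) (U : 'M[R]_(m, d)) (y : 'rV[R]_m) (s : 'I_m -> 'I_K) :=
  m%:R^-1 * \sum_i (dotv (row (s i) N) (row i U) - y 0 i) ^+ 2.
suff: definable (fun g => exists s t : {ffun 'I_m -> 'I_K},
    row_argmax (M g) (U g) s /\ row_argmax (M' g) (U g) t /\
    loss (M g) (U g) (y g) s <= loss (M' g) (U g) (y g) t).
  move/definable_ext; apply=> g; split.
    case=> s [t [argmax_s [argmax_t]]].
    by rewrite (lsq_loss_row_argmax _ argmax_s) (lsq_loss_row_argmax _ argmax_t).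
  have [s argmax_s] := exists_row_argmax (M g) (U g) K_gt0.
  have [t argmax_t] := exists_row_argmax (M' g) (U g) K_gt0.
  rewrite (lsq_loss_row_argmax _ argmax_s) (lsq_loss_row_argmax _ argmax_t).
  by move=> le_loss; exists s, t.
have dot N i k : poly_mx f N -> polynomial_fun (fun g => dotv (row k (N g)) (row i (U g))).
  by move=> pN; exact: polynomial_fun_dotv (poly_mx_row k pN) (poly_mx_row i pU).
have def_argmax N s : poly_mx f N -> definable (fun g => row_argmax (N g) (U g) s).
  move=> pN; apply: definable_forall_fin => i.
  exact: definable_eq_hsupp pN (poly_mx_row i pU) (dot N i (s i) pN).
have poly_loss N s : poly_mx f N -> polynomial_fun (fun g => loss (N g) (U g) (y g) s).
  move=> pN; apply: polynomial_funM; first exact: polynomial_fun_const.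
  apply: (polynomial_fun_sum (index_enum 'I_m)) => i; apply: polynomial_funX.
  exact: polynomial_funD (dot N i (s i) pN) (polynomial_funN (poly_mx_entry 0 i py)).
apply: definable_exists_fin => s; apply: definable_exists_fin => t.
apply: definable_and; first exact: def_argmax.
apply: definable_and; first exact: def_argmax.
exact: definable_le (poly_loss _ s pM) (poly_loss _ t pM').
Qed.

End DefinableGeometry.

Section DefinableEstimator.
Variables (R : realType) (d n : nat) (V : 'I_n -> 'rV[R]_d)
  (Delta : {set {set 'I_n}}).
Hypothesis Delta_covers : forall w, exists2 S, S \in Delta & cone_of V S w.
Local Notation env := (nat -> R).
Local Notation K := #|Delta|.

Lemma definable_lse m f (U : env -> 'M[R]_(m, d)) (y : env -> 'rV[R]_m)
    (h : env -> 'rV[R]_n) : poly_mx f U -> poly_mx f y -> poly_mx f h ->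
  definable (fun g => lse V Delta (U g) (y g) (h g)).
Proof.
move=> pU py ph; have K_gt0 := card_fan_gt0 Delta_covers.
pose Q g (M : 'M[R]_(K, d)) := in_defcone V Delta (row_seq M) /\
  h g = suppvec V (row_seq M) /\
  forall M' : 'M[R]_(K, d), in_defcone V Delta (row_seq M') ->
    lsq_loss (U g) (y g) (row_seq M) <= lsq_loss (U g) (y g) (row_seq M').
suff: definable (fun g => exists M, Q g M).
  by move/definable_ext; apply=> g; rewrite lse_row_seqP.
apply: (@definable_exists_mx _ f) => [g g' M eq_gg' | ].
  by rewrite /Q (poly_mx_prefix pU eq_gg') (poly_mx_prefix py eq_gg') (poly_mx_prefix ph eq_gg').
have pM := poly_mx_vec_mx (poly_mx_fresh_row R f (K * d)).
have [[pU' py'] ph'] :=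
  (poly_mx_widen (K * d) pU, poly_mx_widen (K * d) py, poly_mx_widen (K * d) ph).
rewrite /Q; apply: definable_and; first exact: definable_in_defcone_row_seq pM.
apply: definable_and; first exact: definable_eq_suppvec pM ph'.
apply: (@definable_forall_mx _ (f + K * d)) => [g g' M' eq_gg' | ].
  by rewrite (poly_mx_prefix pU' eq_gg') (poly_mx_prefix py' eq_gg') (poly_mx_prefix pM eq_gg').
have pM' := poly_mx_vec_mx (poly_mx_fresh_row R (f + K * d) (K * d)).
apply: definable_imp; first exact: definable_in_defcone_row_seq pM'.
apply: (definable_le_lsq_loss K_gt0 (poly_mx_widen (K * d) pU') (poly_mx_widen (K * d) py')
  (poly_mx_widen (K * d) pM) pM').
Qed.

Lemma definable_lse_singleton m : definable (fun g =>
  forall y, is_singleton (lse V Delta (vec_mx (env_row g 0 (m * d))) y)).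
Proof.
have pU := poly_mx_vec_mx (poly_mx_fresh_row R 0 (m * d)).
set f := (0 + m * d)%N in pU.
apply: (@definable_forall_row _ f m) => [g g' y eq_gg' | ].
  by rewrite (poly_mx_prefix pU eq_gg').
have [py pU1] := (poly_mx_fresh_row R f m, poly_mx_widen m pU).
apply: (@definable_exists_row _ (f + m) n) => [g g' a eq_gg' | ].
  by rewrite (poly_mx_prefix pU1 eq_gg') (poly_mx_prefix py eq_gg').
have [[pa py2] pU2] := (poly_mx_fresh_row R (f + m) n, poly_mx_widen n py, poly_mx_widen n pU1).
apply: (@definable_forall_row _ (f + m + n) n) => [g g' b eq_gg' | ].
  by rewrite (poly_mx_prefix pU2 eq_gg') (poly_mx_prefix py2 eq_gg') (poly_mx_prefix pa eq_gg').
have pb := poly_mx_fresh_row R (f + m + n) n.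
apply: definable_iff; last exact: definable_eq_mx pb (poly_mx_widen n pa).
exact: definable_lse (poly_mx_widen n pU2) (poly_mx_widen n py2) pb.
Qed.

End DefinableEstimator.

Theorem proposition3p8 (R : realType) (m d n : nat) (V : 'I_n -> 'rV[R]_d)
  (Delta : {set {set 'I_n}}) :
  simplicial_fan V Delta -> polytopal V Delta ->
  semialgebraic_mx (fun U : 'M[R]_(m, d) =>
    forall y : 'rV[R]_m, is_singleton (lse V Delta U y)).
Proof.
move=> _ /polytopal_covers Delta_covers.
have [sa saP] := semialgebraic_definable (m * d) (definable_lse_singleton Delta_covers m).
by exists sa => x; rewrite -saP env_row_env_of.
Qed.
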